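(* Let $m=2k$ with $k\in\mathbb{N}$ and $\beta\in(1,k+1)$. There exists $\epsilon_0(\beta)>0$ such that: if $x\in[\frac{1}{\beta},\frac{1}{\beta}+\epsilon_0(\beta))$ then $T_{\beta,0}(x)\in[\frac{1}{\beta}+\epsilon_0(\beta),\frac{(m-1)\beta+1}{\beta(\beta-1)}-\epsilon_0(\beta)]$; and if $x\in(\frac{(m-1)\beta+1}{\beta(\beta-1)}-\epsilon_0(\beta),\frac{(m-1)\beta+1}{\beta(\beta-1)}]$ then $T_{\beta,m}(x)\in[\frac{1}{\beta}+\epsilon_0(\beta),\frac{(m-1)\beta+1}{\beta(\beta-1)}-\epsilon_0(\beta)]$.
   Context: $T_{\beta,i}(x)=\beta x-i$ for $i\in\{0,\ldots,m\}$. *)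

From Stdlib Require Export Reals.
Open Scope R_scope.

Definition T (beta : R) (i : nat) (x : R) : R := beta * x - INR i.

Definition rend (m : nat) (beta : R) : R :=
  ((INR m - 1) * beta + 1) / (beta * (beta - 1)).

From Stdlib Require Import Reals Lra.
Open Scope R_scope.

(* Both branches are affine of slope [beta]: [T beta 0] sends the left end
   [1/beta] to [1], and [T beta m] sends the right end [rend m beta] to
   [(m + 1 - beta) / (beta - 1)]; both images lie strictly inside
   [(1/beta, rend m beta)].  A small interval at an end is stretched by the
   factor [beta] around that image, so any [eps] with [eps (beta + 1)] below
   the four gaps works. *)

Lemma T_sub (beta : R) (i : nat) (x y : R) :
  T beta i y - T beta i x = beta * (y - x).
Proof. unfold T; ring. Qed.

Lemma T_bound_left (beta : R) (i : nat) (a b eps x : R) :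
  0 < beta -> a + eps <= T beta i a -> T beta i a + beta * eps <= b - eps ->
  a <= x < a + eps -> a + eps <= T beta i x <= b - eps.
Proof.
  intros Hbeta Hlo Hhi [Hx1 Hx2].
  pose proof (T_sub beta i a x) as Hd.
  split; nra.
Qed.

Lemma T_bound_right (beta : R) (i : nat) (a b eps x : R) :
  0 < beta -> a + eps <= T beta i b - beta * eps -> T beta i b <= b - eps ->
  b - eps < x <= b -> a + eps <= T beta i x <= b - eps.
Proof.
  intros Hbeta Hlo Hhi [Hx1 Hx2].
  pose proof (T_sub beta i x b) as Hd.
  split; nra.
Qed.

Lemma exists_small_multiple (s u v w z : R) :
  0 < s -> 0 < u -> 0 < v -> 0 < w -> 0 < z ->
  exists e, 0 < e /\ e * s <= u /\ e * s <= v /\ e * s <= w /\ e * s <= z.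
Proof.
  intros Hs Hu Hv Hw Hz.
  set (g := Rmin (Rmin u v) (Rmin w z)).
  assert (Hg : 0 < g) by (unfold g; repeat apply Rmin_glb_lt; lra).
  assert (Hgu : g <= u) by (unfold g; do 2 (eapply Rle_trans; [apply Rmin_l|]); lra).
  assert (Hgv : g <= v) by (unfold g; eapply Rle_trans; [apply Rmin_l|]; apply Rmin_r).
  assert (Hgw : g <= w) by (unfold g; eapply Rle_trans; [apply Rmin_r|]; apply Rmin_l).
  assert (Hgz : g <= z) by (unfold g; do 2 (eapply Rle_trans; [apply Rmin_r|]); lra).
  exists (g / s).
  replace (g / s * s) with g by (field; lra).
  repeat split; try lra.
  apply Rdiv_lt_0_compat; lra.
Qed.

Section Endpoints.

Variables (m : nat) (beta : R).
Hypothesis beta_gt1 : 1 < beta.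
Hypothesis beta_sq_lt : beta * beta < INR m * beta + 1.

Lemma T_inv_beta : T beta 0 (1 / beta) = 1.
Proof. unfold T; simpl; field; lra. Qed.

Lemma inv_beta_lt1 : 1 / beta < 1.
Proof.
  apply Rlt_0_minus.
  replace (1 - 1 / beta) with ((beta - 1) / beta) by (field; lra).
  apply Rdiv_lt_0_compat; lra.
Qed.

Lemma T_rend : T beta m (rend m beta) = (INR m + 1 - beta) / (beta - 1).
Proof. unfold T, rend; field; lra. Qed.

Let denom_pos : 0 < beta * (beta - 1).
Proof. nra. Qed.

Let excess_pos : 0 < (INR m * beta + 1 - beta * beta) / (beta * (beta - 1)).
Proof. apply Rdiv_lt_0_compat; lra. Qed.

Lemma one_lt_rend : 1 < rend m beta.
Proof.
  apply Rlt_0_minus.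
  replace (rend m beta - 1)
    with ((INR m * beta + 1 - beta * beta) / (beta * (beta - 1)))
    by (unfold rend; field; lra).
  exact excess_pos.
Qed.

Lemma inv_beta_lt_T_rend : 1 / beta < T beta m (rend m beta).
Proof.
  apply Rlt_0_minus; rewrite T_rend.
  replace ((INR m + 1 - beta) / (beta - 1) - 1 / beta)
    with ((INR m * beta + 1 - beta * beta) / (beta * (beta - 1)))
    by (field; lra).
  exact excess_pos.
Qed.

Lemma T_rend_lt_rend : T beta m (rend m beta) < rend m beta.
Proof.
  apply Rlt_0_minus; rewrite T_rend.
  replace (rend m beta - (INR m + 1 - beta) / (beta - 1))
    with ((beta - 1) / beta) by (unfold rend; field; lra).
  apply Rdiv_lt_0_compat; lra.
Qed.

End Endpoints.

Theorem lemma5p3 (k : nat) (beta : R) :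
  1 < beta < INR k + 1 ->
  exists eps0 : R, 0 < eps0 /\
    (forall x : R, 1 / beta <= x < 1 / beta + eps0 ->
       1 / beta + eps0 <= T beta 0 x <= rend (2 * k) beta - eps0) /\
    (forall x : R, rend (2 * k) beta - eps0 < x <= rend (2 * k) beta ->
       1 / beta + eps0 <= T beta (2 * k) x <= rend (2 * k) beta - eps0).
Proof.
  intros [Hbeta Hk].
  assert (Hsq : beta * beta < INR (2 * k) * beta + 1).
  { assert (Hk1 : 1 <= INR k).
    { destruct k as [|k]; [simpl in Hk; lra|].
      rewrite S_INR; pose proof (pos_INR k); lra. }
    rewrite mult_INR; simpl; nra. }
  pose proof (T_inv_beta beta Hbeta) as Ha.
  pose proof (inv_beta_lt1 beta Hbeta) as Ha1.
  pose proof (one_lt_rend (2 * k) beta Hbeta Hsq) as H1b.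
  pose proof (inv_beta_lt_T_rend (2 * k) beta Hbeta Hsq) as Hac.
  pose proof (T_rend_lt_rend (2 * k) beta Hbeta) as Hcb.
  set (a := 1 / beta) in *; set (b := rend (2 * k) beta) in *.
  set (c := T beta (2 * k) b) in *.
  destruct (exists_small_multiple (beta + 1) (1 - a) (b - 1) (c - a) (b - c))
    as [e [He [H1 [H2 [H3 H4]]]]]; [lra .. |].
  exists e; split; [exact He | split]; intros x Hx.
  - apply T_bound_left; nra.
  - apply T_bound_right; fold c; nra.
Qed.
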